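(* Let $\mathcal F$ be a proper filter on $\omega$. The game $\mathfrak G(\mathrm{Fr},[\omega]^{<\omega},\mathcal F^* )$ is equivalent to $\mathfrak G(\mathrm{Fr},\omega,\mathcal F^* )$ (a player has a winning strategy in one iff the same player has one in the other). Consequently the game $\mathfrak G(\mathrm{Fr},[\omega]^{<\omega},\mathcal F^* )$ is determined, and player I has a winning strategy iff $\mathcal F=\mathrm{Fr}$ iff player II has no winning strategy.
   Context: A filter on $\omega$ is a family $\mathcal F\subseteq\mathcal P(\omega)$ closed under finite intersections and supersets and containing all cofinite sets; it is proper if all its members are infinite. $\mathcal F^+=\{X:\omega\setminus X\notin\mathcal F\}$, $\mathcal F^*=\mathcal P(\omega)\setminus\mathcal F^+$. $\mathrm{Fr}$ is the family of cofinite subsets of $\omega$. Game $\mathfrak G(\mathcal X,\omega,\mathcal Z)$: at each stage $k$, I chooses $X_k\in\mathcal X$ and II responds with $n_k\in X_k$; II wins if $\{n_k:k\in\omega\}\in\mathcal Z$. Game $\mathfrak G(\mathcal X,[\omega]^{<\omega},\mathcal Z)$: at each stage $k$, I chooses $X_k\in\mathcal X$ and II responds with a nonempty finite $s_k\subseteq X_k$; II wins if $\bigcup_k s_k\in\mathcal Z$. In each game, I wins when II does not. *)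

From Stdlib Require Import List Arith.
Import ListNotations.
Set Implicit Arguments.

Definition subset := nat -> Prop.
Definition family := subset -> Prop.

Definition cofinite (X : subset) : Prop := exists N, forall n, N <= n -> X n.
Definition finite_set (X : subset) : Prop := exists N, forall n, X n -> n < N.
Definition infinite_set (X : subset) : Prop := ~ finite_set X.

Definition Fr : family := cofinite.

(* filter on omega (in the paper's sense: contains all cofinite sets) *)
Definition is_filter (F : family) : Prop :=
  (forall X Y, F X -> F Y -> F (fun n => X n /\ Y n)) /\
  (forall X Y, F X -> (forall n, X n -> Y n) -> F Y) /\
  (forall X, cofinite X -> F X).

Definition proper_filter (F : family) : Prop :=
  is_filter F /\ forall X, F X -> infinite_set X.

(* F^+ = {X : omega \ X notin F},  F^* = P(omega) \ F^+ = {X : omega \ X in F} *)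
Definition Fplus (F : family) : family := fun X => ~ F (fun n => ~ X n).
Definition Fstar (F : family) : family := fun X => ~ Fplus F X.

Definition same_family (F G : family) : Prop := forall X, F X <-> G X.

Definition pre (A : Type) (f : nat -> A) (k : nat) : list A := map f (seq 0 k).

(* Strategy of I: from the list of II's previous moves, a set.
   Strategy of II: from the list of I's moves so far (latest last), a number. *)

Definition I_wins_pt (Xf Z : family) : Prop :=
  exists sigma : list nat -> subset,
    (forall h, Xf (sigma h)) /\
    forall r : nat -> nat,
      (forall k, sigma (pre r k) (r k)) ->
      ~ Z (fun m => exists k, r k = m).

Definition II_wins_pt (Xf Z : family) : Prop :=
  exists tau : list subset -> nat,
    forall Xs : nat -> subset,
      (forall k, Xf (Xs k)) ->
      (forall k, Xs k (tau (pre Xs (S k)))) /\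
      Z (fun m => exists k, tau (pre Xs (S k)) = m).

(* II's moves are nonempty finite sets, represented as nonempty lists. *)

Definition I_wins_fin (Xf Z : family) : Prop :=
  exists sigma : list (list nat) -> subset,
    (forall h, Xf (sigma h)) /\
    forall r : nat -> list nat,
      (forall k, r k <> [] /\ forall m, In m (r k) -> sigma (pre r k) m) ->
      ~ Z (fun m => exists k, In m (r k)).

Definition II_wins_fin (Xf Z : family) : Prop :=
  exists tau : list subset -> list nat,
    forall Xs : nat -> subset,
      (forall k, Xf (Xs k)) ->
      (forall k, tau (pre Xs (S k)) <> [] /\
                 forall m, In m (tau (pre Xs (S k))) -> Xs k m) /\
      Z (fun m => exists k, In m (tau (pre Xs (S k)))).

(** If F = Fr, player I wins both games by playing the tails [{n | k <= n}]:
    II's answers are then unbounded, so their complement is not cofinite.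
    If F <> Fr, some X in F is not cofinite, and its complement A is an infinite
    member of F^*; II wins both games by always answering a single point of A,
    which meets every cofinite set, and F^* is closed under subsets.
    Answering with singletons also transfers strategies between the two games,
    which gives the remaining implications. *)

From Stdlib Require Import List Arith.
From Stdlib Require Import Classical ClassicalEpsilon Lia.
Import ListNotations.

Definition ext_closed (Z : family) : Prop :=
  forall X Y : subset, (forall n, X n <-> Y n) -> Z X -> Z Y.

Definition unbounded (S : subset) : Prop := forall N, exists n, N <= n /\ S n.

Lemma pre_map {A B : Type} (g : A -> B) (f : nat -> A) k :
  pre (fun j => g (f j)) k = map g (pre f k).
Proof. unfold pre. rewrite map_map. reflexivity. Qed.

Lemma length_pre {A : Type} (f : nat -> A) k : length (pre f k) = k.
Proof. unfold pre. rewrite length_map, length_seq. reflexivity. Qed.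

Lemma last_pre_S {A : Type} (f : nat -> A) k d : last (pre f (S k)) d = f k.
Proof. unfold pre. rewrite seq_S, map_app. apply last_last. Qed.

Fixpoint history {A : Type} (c : list A -> A) (k : nat) : list A :=
  match k with 0 => [] | S k => history c k ++ [c (history c k)] end.

Lemma pre_history {A : Type} (c : list A -> A) k :
  pre (fun j => c (history c j)) k = history c k.
Proof.
  induction k as [|k IHk]; [reflexivity|].
  unfold pre in *. rewrite seq_S, map_app, IHk. reflexivity.
Qed.

Section Transfer.
Variables (Xf Z : family).
Hypothesis Z_ext : ext_closed Z.

Lemma I_wins_fin_pt : I_wins_fin Xf Z -> I_wins_pt Xf Z.
Proof.
  intros [sigma [sigma_legal sigma_wins]].
  exists (fun h => sigma (map (fun n => [n]) h)); split; [intro h; apply sigma_legal|].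
  intros r r_legal Zr. apply (sigma_wins (fun k => [r k])).
  - intro k. split; [discriminate|]. intros m [<-|[]].
    rewrite (pre_map (fun n => [n]) r). apply r_legal.
  - revert Zr. apply Z_ext. intro m. split.
    + intros [k <-]. exists k. left. reflexivity.
    + intros [k [<-|[]]]. exists k. reflexivity.
Qed.

Lemma II_wins_pt_fin : II_wins_pt Xf Z -> II_wins_fin Xf Z.
Proof.
  intros [tau tau_wins]. exists (fun h => [tau h]). intros Xs Xs_legal.
  destruct (tau_wins Xs Xs_legal) as [tau_legal Z_range]. split.
  - intro k. split; [discriminate|]. intros m [<-|[]]. apply tau_legal.
  - revert Z_range. apply Z_ext. intro m. split.
    + intros [k <-]. exists k. left. reflexivity.
    + intros [k [<-|[]]]. exists k. reflexivity.
Qed.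

End Transfer.

Lemma infinite_meets_cofinite (A Y : subset) :
  infinite_set A -> cofinite Y -> exists n, A n /\ Y n.
Proof.
  intros A_inf [N HN]. apply NNPP. intro no_meet. apply A_inf. exists N.
  intros n An. destruct (le_lt_dec N n) as [le_Nn|]; [|assumption].
  exfalso. apply no_meet. exists n. auto.
Qed.

Definition pick_in (A Y : subset) : nat := epsilon (inhabits 0) (fun n => A n /\ Y n).

Lemma pick_in_spec (A Y : subset) :
  infinite_set A -> cofinite Y -> A (pick_in A Y) /\ Y (pick_in A Y).
Proof. intros. unfold pick_in. apply epsilon_spec. apply infinite_meets_cofinite; assumption. Qed.

Section FilterGames.
Variable F : family.
Hypothesis F_filter : is_filter F.

Lemma Fstar_sub (A S : subset) : Fstar F A -> (forall n, S n -> A n) -> Fstar F S.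
Proof.
  destruct F_filter as [_ [F_up _]].
  intros FA SA FS. apply FA. intro FcA. apply FS.
  apply F_up with (fun n => ~ A n); auto.
Qed.

Lemma Fstar_ext_closed : ext_closed (Fstar F).
Proof. intros X Y XY FX. apply Fstar_sub with X; [assumption|]. apply XY. Qed.

Section Frechet.
Hypothesis F_Fr : same_family F Fr.

Lemma not_Fstar_unbounded (S : subset) : unbounded S -> ~ Fstar F S.
Proof.
  intros S_unb FS. apply FS. intro FcS. apply F_Fr in FcS. destruct FcS as [N HN].
  destruct (S_unb N) as [n [le_Nn Sn]]. exact (HN n le_Nn Sn).
Qed.

Lemma I_wins_fin_Fr : I_wins_fin Fr (Fstar F).
Proof.
  exists (fun h n => length h <= n). split; [intro h; exists (length h); auto|].
  intros r r_legal. apply not_Fstar_unbounded. intro N.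
  destruct (r_legal N) as [rN_ne rN_tail]. destruct (r N) as [|m l] eqn:E; [congruence|].
  exists m. split.
  - rewrite <- (length_pre r N). apply rN_tail. left. reflexivity.
  - exists N. rewrite E. left. reflexivity.
Qed.

Lemma not_II_wins_fin_Fr : ~ II_wins_fin Fr (Fstar F).
Proof.
  intros [tau tau_wins].
  destruct (tau_wins (fun k n => k <= n)) as [tau_legal Z_union];
    [intro k; exists k; auto|].
  revert Z_union. apply not_Fstar_unbounded. intro N.
  destruct (tau_legal N) as [ne in_tail]. revert ne in_tail.
  destruct (tau (pre _ (S N))) as [|m l] eqn:E; intros ne in_tail; [congruence|].
  exists m. split; [apply in_tail; left; reflexivity|].
  exists N. rewrite E. left. reflexivity.
Qed.

End Frechet.

Section NotFrechet.
Hypothesis F_not_Fr : ~ same_family F Fr.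

Lemma infinite_Fstar_not_Fr : exists A, infinite_set A /\ Fstar F A.
Proof.
  destruct F_filter as [_ [F_up F_cof]].
  assert (exists X, F X /\ ~ cofinite X) as [X [FX X_not_cof]].
  { apply NNPP. intro all_cof. apply F_not_Fr. intro X. split; [|apply F_cof].
    intro FX. apply NNPP. intro. apply all_cof. exists X. auto. }
  exists (fun n => ~ X n). split.
  - intros [N HN]. apply X_not_cof. exists N. intros n le_Nn.
    apply NNPP. intro nXn. specialize (HN n nXn). lia.
  - intro nF. apply nF. apply F_up with X; auto.
Qed.

Lemma II_wins_pt_not_Fr : II_wins_pt Fr (Fstar F).
Proof.
  destruct infinite_Fstar_not_Fr as [A [A_inf FA]].
  exists (fun h => pick_in A (last h (fun _ => True))). intros Xs Xs_cof.
  assert (answer_spec : forall k, let n := pick_in A (last (pre Xs (S k)) (fun _ => True)) in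
                                  A n /\ Xs k n).
  { intro k. rewrite last_pre_S. apply pick_in_spec; [exact A_inf | apply Xs_cof]. }
  split; [apply answer_spec|].
  apply Fstar_sub with A; [assumption|]. intros n [k <-]. apply answer_spec.
Qed.

Lemma not_I_wins_pt_not_Fr : ~ I_wins_pt Fr (Fstar F).
Proof.
  destruct infinite_Fstar_not_Fr as [A [A_inf FA]]. intros [sigma [sigma_cof sigma_wins]].
  set (answer := fun h => pick_in A (sigma h)).
  assert (answer_spec : forall h, A (answer h) /\ sigma h (answer h))
    by (intro h; apply pick_in_spec; [exact A_inf | apply sigma_cof]).
  apply (sigma_wins (fun j => answer (history answer j))).
  - intro k. rewrite pre_history. apply answer_spec.
  - apply Fstar_sub with A; [assumption|]. intros n [k <-]. apply answer_spec.
Qed.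

End NotFrechet.

End FilterGames.

Theorem theorem2p14 (F : family) (HF : proper_filter F) :
  ((I_wins_fin Fr (Fstar F) <-> I_wins_pt Fr (Fstar F)) /\
   (II_wins_fin Fr (Fstar F) <-> II_wins_pt Fr (Fstar F))) /\
  (I_wins_fin Fr (Fstar F) \/ II_wins_fin Fr (Fstar F)) /\
  ((I_wins_fin Fr (Fstar F) <-> same_family F Fr) /\
   (same_family F Fr <-> ~ II_wins_fin Fr (Fstar F))).
Proof.
  destruct HF as [F_filter _].
  pose proof (I_wins_fin_pt Fr (Fstar F) (Fstar_ext_closed F F_filter)) as I_fin_pt.
  pose proof (II_wins_pt_fin Fr (Fstar F) (Fstar_ext_closed F F_filter)) as II_pt_fin.
  destruct (classic (same_family F Fr)) as [F_Fr|F_not_Fr].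
  - pose proof (I_wins_fin_Fr F F_Fr).
    pose proof (not_II_wins_fin_Fr F F_Fr).
    tauto.
  - pose proof (II_wins_pt_not_Fr F F_filter F_not_Fr).
    pose proof (not_I_wins_pt_not_Fr F F_filter F_not_Fr).
    tauto.
Qed.
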